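(* Let $Q=\langle b\rangle\ltimes_{(g,\gamma)}X$. For all $i,j,k\in\mathbb Z$ and $x,y,z\in X$, $$[(b^i,x),(b^j,y),(b^k,z)]=\Big(1,\ \Sigma_{I(i+j,i+j+k)}(x,y)+\Sigma_{I(i+k,i+j+k)}(x,z)+\Sigma_{I(j+k,i+j+k)}(y,z)\Big).$$
   Context: Let $(X,+)$ be an abelian group and $(g,\gamma)$ a construction pair on it: $g$ a permutation of $X$, $\gamma:X\times X\to X$ symmetric, alternating, biadditive, with (C1) $g^{-1}(g(x)+g(y))=x+y+\gamma(x,y)+g^{-1}(\gamma(x,y))+g^{-2}(\gamma(x,y))$, (C2) $\gamma(\gamma(x,y),z)=0$, (C3) $g^{-1}(\gamma(x,y))=\gamma(g(x),y)$ for all $x,y,z$. Let $\mathrm{Rad}(\gamma)=\{x:\gamma(x,y)=0\ \forall y\}$ and $r(g,\gamma)$ the least positive $r$ with $\sum_{0\le k<r}g^k(x)\in\mathrm{Rad}(\gamma)$ for all $x$ ($\infty$ if none). $I(i,j)$ is $\emptyset$ if $i=j$, $\{i,\dots,j-1\}$ if $i<j$, $\{j,\dots,i-1\}$ if $j<i$. For $U\subseteq\mathbb Z$, $\Sigma_U(x,y)=\sum_{k\in U}g^{-k}(\gamma(x,y))$. For a cyclic group $C=\langle b\rangle$ such that (if finite) $|g|$ and $r(g,\gamma)$ divide $|C|$, $C\ltimes_{(g,\gamma)}X$ is the Moufang loop on $C\times X$ with multiplication $(b^i,x)(b^j,y)=(b^{i+j},g^{-j}(x)+y+\Sigma_{I(i+j,-j)}(x,y))$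 and neutral element $(1,0)$. The associator $[u,v,w]$ in a loop is defined by $(u\cdot vw)[u,v,w]=uv\cdot w$. *)

From HB Require Import structures.
From mathcomp Require Import all_boot all_order all_algebra.
Set Implicit Arguments. Unset Strict Implicit. Unset Printing Implicit Defensive.
Import Order.TTheory GRing.Theory Num.Theory.
Local Open Scope ring_scope.

Section Defs.
Variable X : zmodType.
(* a permutation g of X, given together with its inverse gi *)
Variables (g gi : X -> X).

Definition gpow (k : int) : X -> X :=
  match k with
  | Posz m => iter m g
  | Negz m => iter m.+1 gi
  end.

Variable gamma : X -> X -> X.

Definition symmetric_form := forall x y, gamma x y = gamma y x.
Definition alternating_form := forall x, gamma x x = 0.
Definition biadditive_form :=
  (forall x y z, gamma (x + y) z = gamma x z + gamma y z) /\
  (forall x y z, gamma x (y + z) = gamma x y + gamma x z).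

Definition C1 := forall x y,
  gi (g x + g y) = x + y + gamma x y + gpow (-1) (gamma x y) + gpow (-2) (gamma x y).
Definition C2 := forall x y z, gamma (gamma x y) z = 0.
Definition C3 := forall x y, gi (gamma x y) = gamma (g x) y.

Definition construction_pair :=
  cancel g gi /\ cancel gi g /\ symmetric_form /\ alternating_form /\
  biadditive_form /\ C1 /\ C2 /\ C3.

Definition in_Rad (x : X) := forall y, gamma x y = 0.

Definition is_order_g (m : nat) :=
  (0 < m)%N /\ (forall x, iter m g x = x) /\
  (forall m', (0 < m')%N -> (m' < m)%N -> ~ (forall x, iter m' g x = x)).

Definition r_prop (m : nat) := forall x, in_Rad (\sum_(0 <= k < m) iter k g x).
Definition is_r (m : nat) :=
  (0 < m)%N /\ r_prop m /\
  (forall m', (0 < m')%N -> (m' < m)%N -> ~ r_prop m').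

Definition Iset (i j : int) : seq int :=
  if i < j then [seq i + (k%:Z) | k <- iota 0 `|j - i|%N]
  else [seq j + (k%:Z) | k <- iota 0 `|i - j|%N].

Definition SigmaI (i j : int) (x y : X) : X :=
  \sum_(k <- Iset i j) gpow (- k) (gamma x y).

(* Elements of C \ltimes X are represented by pairs (i, x) standing for (b^i, x);
   C = <b> of order n (n = 0 means infinite), so (i,x) and (j,y) denote the same
   element iff i = j mod n and x = y. *)
Definition same_elt (n : nat) (u v : int * X) : Prop :=
  ((u.1 == v.1 %[mod n%:Z])%Z) /\ u.2 = v.2.

Definition lmul (u v : int * X) : int * X :=
  let: (i, x) := u in let: (j, y) := v in
  (i + j, gpow (- j) x + y + SigmaI (i + j) (- j) x y).

Definition is_associator (n : nat) (u v w a : int * X) : Prop :=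
  same_elt n (lmul (lmul u (lmul v w)) a) (lmul (lmul u v) w).

End Defs.

(* Write Sigma_I(c) = sum_(t in I) g^-t(c), so that Sigma_I(x,y) = Sigma_I(gamma x y).
   The proof is a direct computation of both sides of (u . vw) a = uv . w,
   resting on three facts about a construction pair (g, gamma):
   - the values of gamma, and all their images under powers of g, lie in the
     subgroup rad2 of elements of Rad(gamma) of exponent 2 (by (C2), (C3) and
     the alternating property); on rad2-valued families, the interval sums
     Sigma_I(a,b) behave like a 1-cocycle: Sigma_(a,e) + Sigma_(e,b) = Sigma_(a,b);
   - gamma(g^a x, y) = g^-a gamma(x, y), iterating (C3);
   - g^a(p + q) = g^a p + g^a q + Sigma_(-a, 2a)(p, q), iterating (C1).
   With these, both products reduce to a common "base" plus Sigma terms, and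
   the identity splits into one cocycle relation for each of gamma(x,y),
   gamma(x,z), gamma(y,z).  The formula holds for the representatives
   (i, x) in Z x X themselves. *)

From HB Require Import structures.
From mathcomp Require Import all_boot all_order all_algebra.
From mathcomp Require Import ring zify.
Set Implicit Arguments. Unset Strict Implicit. Unset Printing Implicit Defensive.
Import Order.TTheory GRing.Theory Num.Theory.
Local Open Scope ring_scope.

Lemma int_ind_from (P : int -> Prop) (a : int) :
  (forall b, P b <-> P (b + 1)) -> P a -> forall b, P b.
Proof.
move=> Pstep Pa.
have Pa_plus : forall c : int, P (a + c).
  elim/int_ind => [|n IH|n IH]; first by rewrite addr0.
  - have -> : a + (n.+1)%:Z = (a + n%:Z) + 1 by lia.
    exact: (proj1 (Pstep _)).
  - apply: (proj2 (Pstep _)).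
    by have -> : a + - (n.+1)%:Z + 1 = a + - n%:Z by lia.
by move=> b; rewrite -(subrKC a b); apply: Pa_plus.
Qed.

Section IntervalSums.
Variables (V : zmodType) (f : int -> V).

Definition isum (a b : int) : V := \sum_(t <- Iset a b) f t.

Lemma Iset_up a n : Iset a (a + n%:Z) = [seq a + t%:Z | t <- iota 0 n].
Proof.
rewrite /Iset; case: n => [|n]; first by rewrite addr0 ltxx subrr.
rewrite ifT; last by lia.
by have -> : a + (n.+1)%:Z - a = (n.+1)%:Z by ring.
Qed.

Lemma isum_up a n : isum a (a + n%:Z) = \sum_(t <- iota 0 n) f (a + t%:Z).
Proof. by rewrite /isum Iset_up big_map. Qed.

Lemma isum_sym a b : isum a b = isum b a.
Proof. by rewrite /isum /Iset; case: ltgtP => // ->. Qed.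

Lemma isum_id a : isum a a = 0.
Proof. by have := isum_up a 0; rewrite addr0 big_nil. Qed.

Lemma isum_shift a b s :
  isum (a + s) (b + s) = \sum_(t <- Iset a b) f (t + s).
Proof.
rewrite /isum /Iset ltrD2r.
have -> : b + s - (a + s) = b - a by ring.
have -> : a + s - (b + s) = a - b by ring.
by case: ifP => _; rewrite !big_map; apply: eq_bigr => t _; rewrite addrAC.
Qed.

Section Exponent2.
Hypothesis f2 : forall t, f t + f t = 0.

Lemma isum_step a b : isum a (b + 1) = isum a b + f b.
Proof.
case: (lerP a b) => hab.
- have -> : b = a + (`|(b - a)%R|%N)%:Z by lia.
  by rewrite -addrA -PoszD addn1 !isum_up -addn1 iotaD big_cat big_seq1.
- have -> : a = (b + 1) + (`|(a - (b + 1))%R|%N)%:Z by lia.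
  set n := `|_|%N; rewrite isum_sym isum_up.
  have -> : b + 1 + n%:Z = b + (n.+1)%:Z by lia.
  rewrite (isum_sym (b + _)) isum_up.
  have -> : iota 0 n.+1 = 0%N :: map (addn 1) (iota 0 n) by rewrite -iotaDl.
  rewrite big_cons big_map addr0.
  under [in RHS]eq_bigr => t _ do rewrite PoszD addrA.
  by rewrite [RHS]addrC addrA f2 add0r.
Qed.

Lemma isum_char2 a b : isum a b + isum a b = 0.
Proof. by rewrite /isum -big_split big1 // => t _; apply: f2. Qed.

Lemma isum_from0 a b : isum a b = isum 0 a + isum 0 b.
Proof.
pattern b; apply: (@int_ind_from _ a) => [c|]; last by rewrite isum_id isum_char2.
rewrite !isum_step addrA; split=> [->//|]; exact: addIr.
Qed.

Lemma isum_cocycle a b c : isum a b = isum a c + isum c b.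
Proof.
rewrite (isum_from0 a b) (isum_from0 a c) (isum_from0 c b).
by rewrite -addrA (addrA (isum 0 c)) isum_char2 add0r.
Qed.
End Exponent2.
End IntervalSums.

Section Powers.
Variables (X : zmodType) (g gi : X -> X).
Hypotheses (gK : cancel g gi) (giK : cancel gi g).
Local Notation gp := (gpow g gi).

Lemma gpowS a x : gp (a + 1) x = g (gp a x).
Proof.
case: a => [m|[|m]]; first by rewrite -PoszD addn1.
- by rewrite /= giK.
- have -> : Negz m.+1 + 1 = Negz m by lia.
  by rewrite /= giK.
Qed.

Lemma gpowD a b x : gp (a + b) x = gp a (gp b x).
Proof.
move: x; pattern a; apply: (@int_ind_from _ 0) => [c|]; last by rewrite add0r.
split=> IH x; first by rewrite addrAC gpowS IH gpowS.
by apply: (can_inj gK); rewrite -gpowS -addrAC IH gpowS.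
Qed.

Lemma gpowB1 a x : gp (a - 1) x = gi (gp a x).
Proof. by rewrite addrC gpowD. Qed.
End Powers.

Lemma addrACA3 (V : zmodType) (a1 a2 a3 b1 b2 b3 : V) :
  a1 + a2 + a3 + (b1 + b2 + b3) = a1 + b1 + (a2 + b2) + (a3 + b3).
Proof. by rewrite addrACA (addrACA a1). Qed.

Section ConstructionPair.
Variables (X : zmodType) (g gi : X -> X) (gamma : X -> X -> X).
Local Notation gp := (gpow g gi).
Local Notation lmul := (lmul g gi gamma).
Hypotheses (gK : cancel g gi) (giK : cancel gi g).
Hypotheses (gammaC : forall x y, gamma x y = gamma y x)
  (gamma_alt : forall x, gamma x x = 0)
  (gammaDl : forall x y z, gamma (x + y) z = gamma x z + gamma y z)
  (gammaDr : forall x y z, gamma x (y + z) = gamma x y + gamma x z).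
Hypotheses (pairC1 : C1 g gi gamma) (pairC2 : C2 gamma) (pairC3 : C3 g gi gamma).

Lemma gamma0l y : gamma 0 y = 0.
Proof. by apply: (addrI (gamma 0 y)); rewrite -gammaDl !addr0. Qed.

Lemma gamma0r y : gamma y 0 = 0.
Proof. by rewrite gammaC gamma0l. Qed.

Lemma gamma_char2 x y : gamma x y + gamma x y = 0.
Proof.
have := gamma_alt (x + y).
by rewrite gammaDl !gammaDr !gamma_alt add0r addr0 (gammaC y x).
Qed.

Lemma gamma_gi x y : gamma (gi x) y = g (gamma x y).
Proof. by rewrite -[in RHS](giK x) -pairC3 giK. Qed.

(* (C3) says that g^-1 acting on the values of gamma is the adjoint of g;
   iterating, g^a in one argument of gamma is g^-a on its value. *)
Lemma gamma_gpowl a x y : gamma (gp a x) y = gp (- a) (gamma x y).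
Proof.
move: x; pattern a; apply: (@int_ind_from _ 0) => [c|]; last by [].
split=> IH x.
- by rewrite gpowS // -pairC3 IH opprD gpowB1.
- have -> : gp c x = gi (gp (c + 1) x) by rewrite gpowS // gK.
  by rewrite gamma_gi IH -gpowS // opprD addrNK.
Qed.

Lemma gamma_gpowr a x y : gamma x (gp a y) = gp (- a) (gamma x y).
Proof. by rewrite gammaC gamma_gpowl gammaC. Qed.

(* The powers of g fix 0 (since 0 = gamma 0 0 and by gamma_gpowl). *)
Lemma gpow_zero a : gp a 0 = 0.
Proof. by rewrite -(gamma_alt 0) -[a]opprK -gamma_gpowl gamma0r. Qed.

(* By (C1), g is additive on pairs that are orthogonal for gamma. *)
Lemma g_add_orth p q : gamma p q = 0 -> g (p + q) = g p + g q.
Proof. by move=> pq0; rewrite -[RHS]giK pairC1 pq0 !gpow_zero !addr0. Qed.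

Lemma gpow_add_orth a p q : gamma p q = 0 -> gp a (p + q) = gp a p + gp a q.
Proof.
have gpow_orth b u v : gamma u v = 0 -> gamma (gp b u) (gp b v) = 0.
  by move=> uv0; rewrite gamma_gpowl gamma_gpowr uv0 !gpow_zero.
move: p q; pattern a; apply: (@int_ind_from _ 0) => [c|]; last by [].
split=> IH p q pq0.
- by rewrite !gpowS // IH // g_add_orth // gpow_orth.
- apply: (can_inj gK).
  by rewrite -gpowS // IH // g_add_orth ?gpow_orth // -!gpowS.
Qed.

Lemma gpow_sum a (s : seq int) (F : int -> X) :
  (forall t, in_Rad gamma (F t)) ->
  gp a (\sum_(t <- s) F t) = \sum_(t <- s) gp a (F t).
Proof.
move=> radF; elim: s => [|t s IH]; first by rewrite !big_nil gpow_zero.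
by rewrite !big_cons gpow_add_orth ?IH //; apply: radF.
Qed.

(* The elements of Rad(gamma) of exponent 2; by (C2) and (C3) this subgroup
   contains every value of gamma and is stable under the powers of g. *)
Definition rad2 (c : X) := in_Rad gamma c /\ c + c = 0.

Lemma rad2_gamma x y : rad2 (gamma x y).
Proof. by split; [apply: pairC2 | apply: gamma_char2]. Qed.

Lemma rad2D c d : rad2 c -> rad2 d -> rad2 (c + d).
Proof.
move=> [radc c2] [radd d2]; split; last by rewrite addrACA c2 d2 addr0.
by move=> y; rewrite gammaDl radc radd addr0.
Qed.

Lemma rad2_gpow a c : rad2 c -> rad2 (gp a c).
Proof.
move=> [radc c2]; split; first by move=> y; rewrite gamma_gpowl radc gpow_zero.
by rewrite -gpow_add_orth // c2 gpow_zero.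
Qed.

Lemma rad2_orth c x : rad2 c -> gamma x c = 0.
Proof. by move=> [radc _]; rewrite gammaC radc. Qed.

Lemma rad2_sum (s : seq int) (F : int -> X) :
  (forall t, rad2 (F t)) -> rad2 (\sum_(t <- s) F t).
Proof.
move=> radF; elim: s => [|t s IH]; last by rewrite big_cons; apply: rad2D.
by rewrite big_nil; split; [move=> y; rewrite gamma0l | rewrite addr0].
Qed.

Definition sigma (c : X) (a b : int) : X := isum (fun t => gp (- t) c) a b.

Lemma SigmaI_sigma a b x y : SigmaI g gi gamma a b x y = sigma (gamma x y) a b.
Proof. by []. Qed.

Lemma rad2_sigma c a b : rad2 c -> rad2 (sigma c a b).
Proof. by move=> radc; apply: rad2_sum => t; apply: rad2_gpow. Qed.

Lemma sigmaD c d a b : rad2 c -> sigma (c + d) a b = sigma c a b + sigma d a b.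
Proof.
move=> [radc _]; rewrite /sigma /isum -big_split.
by apply: eq_bigr => t _; rewrite gpow_add_orth.
Qed.

Lemma sigma_gpow m c a b : sigma (gp m c) a b = sigma c (a - m) (b - m).
Proof.
rewrite /sigma isum_shift /isum; apply: eq_bigr => t _.
by rewrite -gpowD // opprB addrC.
Qed.

Lemma gpow_sigma m c a b : rad2 c -> gp m (sigma c a b) = sigma c (a - m) (b - m).
Proof.
move=> radc; rewrite -sigma_gpow /sigma /isum gpow_sum.
  by apply: eq_bigr => t _; rewrite -!gpowD // addrC.
by move=> t; case: (rad2_gpow (- t) radc).
Qed.

Lemma sigma_chain c a e b : rad2 c -> sigma c a e + sigma c e b = sigma c a b.
Proof.
by move=> radc; rewrite -isum_cocycle // => t; case: (rad2_gpow (- t) radc).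
Qed.

Lemma sigma_sym c a b : sigma c a b = sigma c b a.
Proof. exact: isum_sym. Qed.

Lemma sigma_id c a : sigma c a a = 0.
Proof. exact: isum_id. Qed.

Lemma sigma0 a b : sigma 0 a b = 0.
Proof. by rewrite /sigma /isum big1 // => t _; rewrite gpow_zero. Qed.

(* (C1) rewritten: the defect of additivity of g is Sigma_{I(-1,2)}. *)
Lemma g_add p q : g (p + q) = g p + g q + sigma (gamma p q) (-1) 2.
Proof.
have rad_pq := rad2_gamma p q.
set d := gamma p q in rad_pq *.
have sigma03 : sigma d 0 3 = d + (gp (-1) d + gp (-2) d).
  by rewrite /sigma (isum_up _ 0 3) !big_cons big_nil !add0r addr0 oppr0.
have rad03 : rad2 (sigma d 0 3) by apply: rad2_sigma.
have sum_g : g p + g q = g (p + q) + g (sigma d 0 3).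
  rewrite -[LHS]giK pairC1 -/d -!addrA -sigma03 addrA.
  by rewrite (@g_add_orth (p + q)) //; apply: rad2_orth.
have -> : sigma d (-1) 2 = g (sigma d 0 3) by rewrite -[g _]/(gp 1 _) gpow_sigma.
rewrite sum_g -addrA.
by case: (rad2_gpow 1 rad03) => _ /= ->; rewrite addr0.
Qed.

Lemma gpow_add a p q :
  gp a (p + q) = gp a p + gp a q + sigma (gamma p q) (- a) (a + a).
Proof.
have rad_pq := rad2_gamma p q.
move: p q rad_pq; pattern a; apply: (@int_ind_from _ 0) => [c|]; last first.
  by move=> p q _; rewrite oppr0 addr0 sigma_id addr0.
suff g_step p q : rad2 (gamma p q) ->
    g (gp c p + gp c q + sigma (gamma p q) (- c) (c + c)) =
    gp (c + 1) p + gp (c + 1) q + sigma (gamma p q) (- (c + 1)) (c + 1 + (c + 1)).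
  split=> IH p q rad_pq; first by rewrite gpowS // IH // g_step.
  by apply: (can_inj gK); rewrite -gpowS // IH // g_step.
move=> rad_pq; rewrite g_add_orth; last exact/rad2_orth/rad2_sigma.
rewrite g_add gamma_gpowl gamma_gpowr -gpowD // sigma_gpow.
rewrite -[g (sigma _ _ _)]/(gp 1 _) gpow_sigma // !gpowS // -addrA.
congr (_ + _); rewrite addrC.
have -> : -1 - (- c - c) = c + c - 1 by ring.
by rewrite sigma_chain //; congr (sigma _ _ _); ring.
Qed.

Variables (i j k : int) (x y z : X).

Lemma mul_u_vw :
  (lmul (i, x) (lmul (j, y) (k, z))).2 =
  gp (- (j + k)) x + gp (- k) y + z +
  (sigma (gamma x y) (i + j) (- j - k - k) + sigma (gamma x z) (i + j + k) (- (j + k))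
   + sigma (gamma y z) (j + k) (- k)).
Proof.
have rad_yz := rad2_gamma y z.
rewrite /= !SigmaI_sigma !gammaDr gamma_gpowr opprK (rad2_orth _ (rad2_sigma _ _ rad_yz)).
rewrite addr0 sigmaD ?sigma_gpow; last exact/rad2_gpow/rad2_gamma.
have -> : i + (j + k) - k = i + j by ring.
have -> : - (j + k) - k = - j - k - k by ring.
by rewrite !addrA -!(addrAC _ (sigma (gamma y z) _ _)).
Qed.

Lemma mul_uv_w :
  (lmul (lmul (i, x) (j, y)) (k, z)).2 =
  gp (- (j + k)) x + gp (- k) y + z +
  (sigma (gamma x y) (i + j + k) (- j - k - k) + sigma (gamma x z) (i + k) (- (j + k))
   + sigma (gamma y z) (i + j + k) (- k)).
Proof.
have rad_xy := rad2_gamma x y.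
have rad_S1 := rad2_sigma (i + j) (- j) rad_xy.
rewrite /= !SigmaI_sigma !gammaDl gamma_gpowl opprK (proj1 rad_S1) addr0.
rewrite sigmaD ?sigma_gpow; last exact/rad2_gpow/rad2_gamma.
rewrite gpow_add_orth; last exact: rad2_orth.
rewrite gpow_add gamma_gpowl opprK sigma_gpow gpow_sigma // -gpowD //.
have merge_xy : sigma (gamma x y) (- - k - j) (- k - k - j) +
    sigma (gamma x y) (i + j - - k) (- j - - k) =
    sigma (gamma x y) (i + j + k) (- j - k - k).
  rewrite addrC; have -> : - j - - k = - - k - j by ring.
  by rewrite sigma_chain //; congr (sigma _ _ _); ring.
rewrite -[_ + _ + sigma _ (i + j - - k) _]addrA merge_xy.
have -> : - k - j = - (j + k) by ring.
have -> : i + j + k - j = i + k by ring.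
by rewrite [in LHS](addrAC _ _ z) !addrA.
Qed.

Lemma mul_rad2_r u c : rad2 c -> (lmul u (0, c)).2 = u.2 + c.
Proof. by case: u => a p radc; rewrite /= SigmaI_sigma rad2_orth // sigma0 addr0. Qed.

Variable n : nat.

(* The main computation: (u . vw) a = uv . w, where each of the three Sigma
   terms of a closes one cocycle relation. *)
Lemma associator_formula :
  is_associator g gi gamma n (i, x) (j, y) (k, z)
    (0, SigmaI g gi gamma (i + j) (i + j + k) x y
      + SigmaI g gi gamma (i + k) (i + j + k) x z
      + SigmaI g gi gamma (j + k) (i + j + k) y z).
Proof.
split; first by rewrite /= addr0 addrA eqxx.
rewrite !SigmaI_sigma mul_rad2_r; last by do 2?apply: rad2D; apply/rad2_sigma/rad2_gamma.
rewrite mul_u_vw mul_uv_w -addrA; congr (_ + _); rewrite addrACA3.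
have rad_xy := rad2_gamma x y; have rad_xz := rad2_gamma x z.
have rad_yz := rad2_gamma y z.
congr (_ + _ + _); rewrite addrC.
- by rewrite (sigma_sym _ (i + j)) sigma_chain.
- by rewrite sigma_chain.
- by rewrite (sigma_sym _ (j + k)) sigma_chain.
Qed.
End ConstructionPair.

Theorem mainTheorem5 (X : zmodType) (g gi : X -> X) (gamma : X -> X -> X)
  (n : nat)
  (Hpair : construction_pair g gi gamma)
  (Hn : (0 < n)%N ->
        (exists m, is_order_g g m /\ (m %| n)%N) /\
        (exists m, is_r g gamma m /\ (m %| n)%N))
  (i j k : int) (x y z : X) :
  is_associator g gi gamma n (i, x) (j, y) (k, z)
    (0, SigmaI g gi gamma (i + j) (i + j + k) x y
      + SigmaI g gi gamma (i + k) (i + j + k) x z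
      + SigmaI g gi gamma (j + k) (i + j + k) y z).
Proof.
have [gK [giK [gammaC [gamma_alt [[gammaDl gammaDr] [pairC1 [pairC2 pairC3]]]]]]] := Hpair.
exact: associator_formula.
Qed.
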